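(* Let $\{\mathscr E_1,\dots,\mathscr E_{\mathfrak n},\Delta\}$, $\mathfrak n\ge2$, be a partition of $E$ not depending on $N$, and $\alpha_N,\theta_N$ positive sequences with $\alpha_N/\theta_N\to0$, such that (H1) and (H2) hold with $(a_N,b_N)=(\alpha_N,\theta_N)$. Then for every $x$ such that $\mathscr E_x$ is not a singleton and all $\eta\neq\xi\in\mathscr E_x$, $$\lim_{N\to\infty}\frac{\mathrm{Cap}_N(\mathscr E_x,\breve{\mathscr E}_x)}{\mathrm{Cap}_N(\eta,\xi)}=0,\qquad \breve{\mathscr E}_x=\bigcup_{y\ne x}\mathscr E_y.$$
   Context: Setting: $E$ is a fixed finite set. For each $N\ge1$, $(\eta^N_t)_{t\ge0}$ is a continuous-time irreducible Markov chain on $E$ with jump rates $R_N(\eta,\xi)$, holding rates $\lambda_N(\eta)=\sum_{\xi\neq\eta}R_N(\eta,\xi)$ and unique invariant probability measure $\mu_N$; $\mathbb P_\eta$ denotes the law started at $\eta$. For $A\subset E$, $H_A=\inf\{t>0:\eta^N_t\in A\}$, $H^+_A=\inf\{t>\tau_1:\eta^N_t\in A\}$, $\tau_1$ the first jump time. For disjoint nonempty $A,B$, $\mathrm{Cap}_N(A,B)=\sum_{\eta\in A}\mu_N(\eta)\lambda_N(\eta)\mathbb P_\eta[H_B<H^+_A]$, $\mathrm{Cap}_N(\eta,\xi)=\mathrm{Cap}_N(\{\eta\},\{\xi\})$. For nonempty $F\subset E$ the trace on $F$ is $\eta^F_t=\eta^N_{S_F(t)}$, $S_F(t)=\sup\{s:\int_0^s\mathbf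 1\{\eta^N_r\in F\}dr\le t\}$, an irreducible Markov chain on $F$ with jump rates $R^F_N$. Conditions: with $\mathscr E=\bigcup_x\mathscr E_x$ and $r^{\mathscr E}_N(\mathscr E_x,\mathscr E_y)=\mu_N(\mathscr E_x)^{-1}\sum_{\eta\in\mathscr E_x}\mu_N(\eta)\sum_{\xi\in\mathscr E_y}R^{\mathscr E}_N(\eta,\xi)$, (H1) for all $x\neq y$, $r_{\mathscr E}(x,y):=\lim_N b_Nr^{\mathscr E}_N(\mathscr E_x,\mathscr E_y)$ exists in $[0,\infty)$ and $\sum_x\sum_{y\ne x}r_{\mathscr E}(x,y)>0$; (H2) for each $x$ with $|\mathscr E_x|\ge2$ and $\eta\ne\xi\in\mathscr E_x$, $\liminf_N a_N\mathrm{Cap}_N(\eta,\xi)/\mu_N(\mathscr E_x)>0$. *)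

From Stdlib Require Import Reals Relations ClassicalEpsilon.
From mathcomp Require Import all_boot.
Set Implicit Arguments. Unset Strict Implicit. Unset Printing Implicit Defensive.
Local Open Scope R_scope.

Section MC.
Variable E : finType.

Definition rsum (A : {set E}) (f : E -> R) : R := \big[Rplus/0]_(x in A) f x.

Definition hold_rate (Rt : E -> E -> R) (x : E) : R :=
  \big[Rplus/0]_(y | y != x) Rt x y.

Definition jump_prob (Rt : E -> E -> R) (x y : E) : R :=
  if y == x then 0 else Rt x y / hold_rate Rt x.

(* probability, starting at z (time 0 counts), that the jump chain enters T
   before S within k jumps *)
Fixpoint hit_before (Rt : E -> E -> R) (T S : {set E}) (k : nat) (z : E) : R :=
  match k with
  | O => 0
  | k'.+1 => if z \in T then 1 else if z \in S then 0 else
       \big[Rplus/0]_w (jump_prob Rt z w * hit_before Rt T S k' w)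
  end.

Definition seq_lim (u : nat -> R) : R := epsilon (inhabits 0) (fun l => Un_cv u l).

(* P_x[ chain hits T (after the first jump) before it hits S (after the first jump) ] *)
Definition escape (Rt : E -> E -> R) (T S : {set E}) (x : E) : R :=
  seq_lim (fun k => \big[Rplus/0]_w (jump_prob Rt x w * hit_before Rt T S k w)).

Definition cap (Rt : E -> E -> R) (mu : E -> R) (A B : {set E}) : R :=
  rsum A (fun x => mu x * hold_rate Rt x * escape Rt B A x).

(* jump rates of the trace chain on F: R^F(x,y) = lambda(x) P_x[H^+_F = H^+_y] *)
Definition trace_rate (Rt : E -> E -> R) (F : {set E}) (x y : E) : R :=
  hold_rate Rt x * escape Rt [set y] (F :\ y) x.

Definition mean_trace_rate (Rt : E -> E -> R) (mu : E -> R) (F A B : {set E}) : R :=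
  / rsum A mu * rsum A (fun x => mu x * rsum B (fun y => trace_rate Rt F x y)).

Definition irreducible (Rt : E -> E -> R) : Prop :=
  forall x y : E, clos_refl_trans E (fun u v => u <> v /\ 0 < Rt u v) x y.

Definition invariant_prob (Rt : E -> E -> R) (mu : E -> R) : Prop :=
  (forall x, 0 <= mu x) /\ rsum setT mu = 1 /\
  (forall y, \big[Rplus/0]_(x | x != y) (mu x * Rt x y) = mu y * hold_rate Rt y).

End MC.

(* Splitting the escape from E_x according to the first point of E_1 u ... u E_n reached
   after leaving E_x gives Cap(E_x, B_x) = mu(E_x) * sum_(y <> x) r(E_x, E_y), with B_x the
   union of the other E_y and r the mean rate of the trace process.  So by (H1)
   theta_N Cap(E_x, B_x) / mu(E_x) converges, while (H2) eventually gives
   Cap(eta, xi) >= c mu(E_x) / alpha_N; hence the ratio is O(alpha_N / theta_N). *)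

From Stdlib Require Import Reals ClassicalEpsilon Lra Psatz.
From HB Require Import structures.
From mathcomp Require Import all_boot.
Local Open Scope R_scope.
Set Implicit Arguments. Unset Strict Implicit. Unset Printing Implicit Defensive.

HB.instance Definition _ := Monoid.isComLaw.Build R 0 Rplus
  (fun a b c => esym (Rplus_assoc a b c)) Rplus_comm Rplus_0_l.
HB.instance Definition _ := Monoid.isComLaw.Build R 1 Rmult
  (fun a b c => esym (Rmult_assoc a b c)) Rmult_comm Rmult_1_l.
HB.instance Definition _ := Monoid.isMulLaw.Build R 0 Rmult Rmult_0_l Rmult_0_r.
HB.instance Definition _ := Monoid.isAddLaw.Build R Rmult Rplus
  Rmult_plus_distr_r Rmult_plus_distr_l.

Lemma big_Rle (I : Type) (s : seq I) (P : pred I) (f g : I -> R) :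
  (forall i, P i -> f i <= g i) ->
  \big[Rplus/0]_(i <- s | P i) f i <= \big[Rplus/0]_(i <- s | P i) g i.
Proof.
move=> fg; apply: (big_ind2 (fun a b => a <= b)) => //; first lra.
by move=> *; apply: Rplus_le_compat.
Qed.

Lemma big_Rge0 (I : Type) (s : seq I) (P : pred I) (f : I -> R) :
  (forall i, P i -> 0 <= f i) -> 0 <= \big[Rplus/0]_(i <- s | P i) f i.
Proof.
move=> f_ge0; apply: (big_ind (fun a => 0 <= a)) => //; first lra.
by move=> *; lra.
Qed.

Lemma Rinv_ge0 (x : R) : 0 <= x -> 0 <= / x.
Proof.
move=> x_ge0; have [x_gt0|<-] := Rle_lt_or_eq_dec _ _ x_ge0.
  exact/Rlt_le/Rinv_0_lt_compat.
by rewrite Rinv_0; lra.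
Qed.

Lemma partition_disjoint_bigcup_cond (T I : finType) (R : Type) (idx : R)
    (op : Monoid.com_law idx) (P : pred I) (F : I -> {set T}) (e : T -> R) :
    (forall i j, P i -> P j -> i != j -> [disjoint F i & F j]) ->
  \big[op/idx]_(x in \bigcup_(i | P i) F i) e x =
    \big[op/idx]_(i | P i) \big[op/idx]_(x in F i) e x.
Proof.
move=> disjF; pose G i := if P i then F i else set0.
have -> : \bigcup_(i | P i) F i = \bigcup_i G i by rewrite big_mkcond.
rewrite partition_disjoint_bigcup => [|i j ij]; last first.
  rewrite /G -setI_eq0; case Pi: (P i); case Pj: (P j);
    rewrite ?set0I ?setI0 // setI_eq0; exact: disjF.
rewrite [RHS]big_mkcond; apply: eq_bigr => i _; rewrite /G.
by case: (P i); rewrite ?big_set0.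
Qed.

Lemma Un_cv_const (a : R) : Un_cv (fun _ => a) a.
Proof. by move=> e e_gt0; exists 0%nat => k _; rewrite /R_dist Rminus_diag Rabs_R0. Qed.

Lemma Un_cv_big (I : Type) (s : seq I) (P : pred I) (u : I -> nat -> R) (l : I -> R) :
  (forall i, P i -> Un_cv (u i) (l i)) ->
  Un_cv (fun k => \big[Rplus/0]_(i <- s | P i) u i k) (\big[Rplus/0]_(i <- s | P i) l i).
Proof.
move=> cv_u; elim: s => [|a s IH].
  rewrite big_nil; apply: Un_cv_ext (Un_cv_const 0) => k; by rewrite big_nil.
rewrite big_cons; case Pa: (P a).
  apply: Un_cv_ext (CV_plus _ _ _ _ (cv_u a Pa) IH) => k; by rewrite big_cons Pa.
by apply: Un_cv_ext IH => k; rewrite big_cons Pa.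
Qed.

Lemma Un_cv_ge0 (u : nat -> R) (l : R) : (forall k, 0 <= u k) -> Un_cv u l -> 0 <= l.
Proof.
move=> u_ge0 cv_u; apply: Rnot_lt_le => l_lt0.
have [N HN] := cv_u (- l) ltac:(lra).
have := HN N (le_n N); rewrite /R_dist => /Rabs_def2 [? _]; have := u_ge0 N; lra.
Qed.

Lemma Un_cv_squeeze0 (u v : nat -> R) (N0 : nat) :
  (forall N, (N0 <= N)%N -> 0 <= u N <= v N) -> Un_cv v 0 -> Un_cv u 0.
Proof.
move=> uv cv_v e e_gt0; have [N1 HN1] := cv_v e e_gt0.
exists (maxn N0 N1) => k /leP; rewrite geq_max => /andP [N0k N1k].
have := HN1 k (leP N1k); have := uv k N0k; rewrite /R_dist !Rminus_0_r => -[? ?].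
rewrite !Rabs_right; lra.
Qed.

Lemma seq_limE (u : nat -> R) (l : R) : Un_cv u l -> seq_lim u = l.
Proof.
move=> cv_u; apply: (UL_sequence u) => //.
by apply: epsilon_spec; exists l.
Qed.

Section JumpChain.
Variables (E : finType) (Rt : E -> E -> R).
Hypothesis Rt_ge0 : forall x y, x <> y -> 0 <= Rt x y.

Lemma hold_rate_ge0 z : 0 <= hold_rate Rt z.
Proof. by apply: big_Rge0 => y /eqP yz; apply: Rt_ge0; auto. Qed.

Lemma jump_prob_ge0 z w : 0 <= jump_prob Rt z w.
Proof.
rewrite /jump_prob; case: eqP => [_|/nesym wz]; first lra.
exact: Rmult_le_pos (Rt_ge0 wz) (Rinv_ge0 (hold_rate_ge0 z)).
Qed.

(* The jump law is sub-stochastic: it vanishes at absorbing states, where [/ 0 = 0]. *)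
Lemma sum_jump_prob_le1 z : \big[Rplus/0]_w jump_prob Rt z w <= 1.
Proof.
have -> : \big[Rplus/0]_w jump_prob Rt z w = hold_rate Rt z * / hold_rate Rt z.
  rewrite /hold_rate big_distrl /= (bigID (fun w => w == z)) /=.
  rewrite big1 ?Rplus_0_l; last by move=> w /eqP ->; rewrite /jump_prob eqxx.
  by apply: eq_bigr => w /negbTE wz; rewrite /jump_prob wz.
have [hold_gt0|<-] := Rle_lt_or_eq_dec _ _ (hold_rate_ge0 z).
  by rewrite Rinv_r; lra.
by rewrite Rmult_0_l; lra.
Qed.

Lemma jump_average_le1 (f : E -> R) z :
  (forall w, f w <= 1) -> \big[Rplus/0]_w (jump_prob Rt z w * f w) <= 1.
Proof.
move=> f_le1; apply: Rle_trans (sum_jump_prob_le1 z); apply: big_Rle => w _.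
rewrite -[X in _ <= X]Rmult_1_r; exact/Rmult_le_compat_l/f_le1/jump_prob_ge0.
Qed.

Lemma hit_before_ge0 T S k z : 0 <= hit_before Rt T S k z.
Proof.
elim: k z => [|k IH] z /=; first lra.
case: (z \in T); first lra; case: (z \in S); first lra.
by apply: big_Rge0 => w _; apply: Rmult_le_pos; [apply: jump_prob_ge0 | apply: IH].
Qed.

Lemma hit_before_le1 T S k z : hit_before Rt T S k z <= 1.
Proof.
elim: k z => [|k IH] z /=; first lra.
case: (z \in T); first lra; case: (z \in S); first lra.
exact: jump_average_le1.
Qed.

Lemma hit_before_leS T S k z : hit_before Rt T S k z <= hit_before Rt T S k.+1 z.
Proof.
elim: k z => [|k IH] z; first exact: hit_before_ge0.
rewrite [hit_before _ _ _ k.+1 _]/= [hit_before _ _ _ k.+2 _]/=.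
case: (z \in T); first lra; case: (z \in S); first lra.
by apply: big_Rle => w _; apply: Rmult_le_compat_l; [apply: jump_prob_ge0 | apply: IH].
Qed.

Lemma escape_cv T S z :
  Un_cv (fun k => \big[Rplus/0]_w (jump_prob Rt z w * hit_before Rt T S k w))
        (escape Rt T S z).
Proof.
set u := fun k => _.
have [l cv_u] : {l | Un_cv u l}.
  apply: growing_cv.
    move=> k; apply: big_Rle => w _.
    by apply: Rmult_le_compat_l; [apply: jump_prob_ge0 | apply: hit_before_leS].
  by exists 1 => _ [k ->]; apply: jump_average_le1 => w; apply: hit_before_le1.
by rewrite /escape (seq_limE cv_u).
Qed.

Lemma escape_ge0 T S z : 0 <= escape Rt T S z.
Proof.
apply: Un_cv_ge0 (escape_cv T S z) => k; apply: big_Rge0 => w _.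
by apply: Rmult_le_pos; [apply: jump_prob_ge0 | apply: hit_before_ge0].
Qed.

Lemma mean_trace_rate_ge0 (mu : E -> R) F A B :
  (forall z, 0 <= mu z) -> 0 <= mean_trace_rate Rt mu F A B.
Proof.
move=> mu_ge0; have muA_ge0 : 0 <= rsum A mu by apply: big_Rge0.
apply: Rmult_le_pos; first exact: Rinv_ge0.
apply: big_Rge0 => z _; apply: Rmult_le_pos => //; apply: big_Rge0 => y _.
exact: Rmult_le_pos (hold_rate_ge0 z) (escape_ge0 _ _ z).
Qed.

End JumpChain.

Section Decomposition.
Variables (E : finType) (Rt : E -> E -> R) (A B U : {set E}).
Hypothesis Rt_ge0 : forall x y, x <> y -> 0 <= Rt x y.
Hypothesis U_AB : U = A :|: B.

(* Reaching B before A means reaching some y in B before the rest of U. *)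
Lemma hit_before_partition k z :
  hit_before Rt B A k z = \big[Rplus/0]_(y in B) hit_before Rt [set y] (U :\ y) k z.
Proof.
have yU y : y \in B -> y \in U by rewrite U_AB inE orbC => ->.
elim: k z => [|k IH] z /=; first by rewrite big1.
have [zB|zNB] := boolP (z \in B).
  rewrite (bigD1 z) //= in_set1 eqxx big1 ?Rplus_0_r // => y /andP [yB yz].
  by rewrite in_set1 eq_sym (negbTE yz) in_setD1 eq_sym yz yU.
have zNy y : y \in B -> (z == y) = false by move=> yB; apply: contraNF zNB => /eqP ->.
have [zA|zNA] := boolP (z \in A).
  by rewrite [RHS]big1 // => y yB; rewrite in_set1 in_setD1 zNy // U_AB in_setU zA.
rewrite [RHS](eq_bigr (fun y => \big[Rplus/0]_w
    (jump_prob Rt z w * hit_before Rt [set y] (U :\ y) k w))); last first.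
  by move=> y yB; rewrite in_set1 in_setD1 zNy // U_AB in_setU (negbTE zNA) (negbTE zNB).
by rewrite exchange_big /=; apply: eq_bigr => w _; rewrite IH big_distrr.
Qed.

Lemma escape_partition z :
  escape Rt B A z = \big[Rplus/0]_(y in B) escape Rt [set y] (U :\ y) z.
Proof.
apply: UL_sequence (escape_cv Rt_ge0 B A z) _.
have cv_y y (_ : y \in B) := escape_cv Rt_ge0 [set y] (U :\ y) z.
apply: Un_cv_ext (Un_cv_big (index_enum E) cv_y) => k.
rewrite exchange_big /=; apply: eq_bigr => w _.
by rewrite hit_before_partition big_distrr.
Qed.

Lemma cap_partition (mu : E -> R) (I : finType) (P : pred I) (F : I -> {set E}) :
  B = \bigcup_(i | P i) F i ->
  (forall i j, P i -> P j -> i != j -> [disjoint F i & F j]) ->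
  rsum A mu <> 0 ->
  cap Rt mu A B = rsum A mu * \big[Rplus/0]_(i | P i) mean_trace_rate Rt mu U A (F i).
Proof.
move=> B_F disjF muA_neq0.
rewrite big_distrr /= /cap /rsum.
rewrite (eq_bigr (fun z => \big[Rplus/0]_(i | P i) (mu z * hold_rate Rt z *
     \big[Rplus/0]_(w in F i) escape Rt [set w] (U :\ w) z))); last first.
  move=> z _; rewrite escape_partition // {1}B_F.
  by rewrite partition_disjoint_bigcup_cond // big_distrr.
rewrite exchange_big /=; apply: eq_bigr => i _.
rewrite /mean_trace_rate /rsum -Rmult_assoc Rinv_r // Rmult_1_l.
by apply: eq_bigr => z _; rewrite /trace_rate -big_distrr /=; ring.
Qed.

End Decomposition.


Lemma Rdiv_den_gt0 (x y c : R) : 0 <= y -> 0 < c -> c <= x / y -> 0 < y.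
Proof.
move=> y_ge0 c_gt0; have [//|<-] := Rle_lt_or_eq_dec _ _ y_ge0.
by rewrite /Rdiv Rinv_0 Rmult_0_r; lra.
Qed.

Lemma Rdiv_bounds_of_lower_bound (P T K a c : R) :
  0 < P -> 0 < a -> 0 < c -> 0 <= T -> c <= a * K / P -> 0 <= P * T / K <= a * T / c.
Proof.
move=> P_gt0 a_gt0 c_gt0 T_ge0 c_le.
have cP_le : c * P <= a * K.
  have := Rmult_le_compat_r P _ _ (Rlt_le _ _ P_gt0) c_le.
  by replace (a * K / P * P) with (a * K) by (field; lra).
have K_gt0 : 0 < K by nra.
split; first by apply: Rle_mult_inv_pos; nra.
apply: (Rmult_le_reg_r (c * K)); first nra.
replace (P * T / K * (c * K)) with (c * P * T) by (field; lra).
replace (a * T / c * (c * K)) with (a * K * T) by (field; lra).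
nra.
Qed.

Theorem lemma6p2 (E : finType) (n : nat)
  (Rt : nat -> E -> E -> R) (mu : nat -> E -> R)
  (Ec : 'I_n -> {set E}) (Delta : {set E}) (alpha theta : nat -> R) :
  (2 <= n)%N ->
  (forall N x y, x <> y -> 0 <= Rt N x y) ->
  (forall N, irreducible (Rt N)) ->
  (forall N, invariant_prob (Rt N) (mu N)) ->
  (* {E_1,...,E_n, Delta} is a partition of E *)
  (forall x, Ec x != set0) ->
  (forall x y, x <> y -> [disjoint Ec x & Ec y]) ->
  (forall x, [disjoint Ec x & Delta]) ->
  (forall z : E, z \in Delta \/ exists x, z \in Ec x) ->
  (forall N, 0 < alpha N) -> (forall N, 0 < theta N) ->
  Un_cv (fun N => alpha N / theta N) 0 ->
  (* (H1) with b_N = theta_N *)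
  (exists r : 'I_n -> 'I_n -> R,
     (forall x y, x <> y ->
        Un_cv (fun N => theta N *
                 mean_trace_rate (Rt N) (mu N) (\bigcup_(i : 'I_n) Ec i) (Ec x) (Ec y))
              (r x y)) /\
     0 < \big[Rplus/0]_(x : 'I_n) \big[Rplus/0]_(y : 'I_n | y != x) r x y) ->
  (* (H2) with a_N = alpha_N *)
  (forall x : 'I_n, (1 < #|Ec x|)%N ->
     forall a b, a \in Ec x -> b \in Ec x -> a <> b ->
     exists c, 0 < c /\ exists N0 : nat, forall N : nat, (N0 <= N)%N ->
       c <= alpha N * cap (Rt N) (mu N) [set a] [set b] / rsum (Ec x) (mu N)) ->
  forall x : 'I_n, (1 < #|Ec x|)%N ->
  forall a b, a \in Ec x -> b \in Ec x -> a <> b ->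
  Un_cv (fun N => cap (Rt N) (mu N) (Ec x) (\bigcup_(y : 'I_n | y != x) Ec y)
                  / cap (Rt N) (mu N) [set a] [set b]) 0.
Proof.
move=> _ Rt_ge0 _ mu_inv _ disjE _ _ alpha_gt0 theta_gt0 cv_alpha_theta [r [cv_r _]] H2
  x Ex_gt1 a b aEx bEx ab.
have [c [c_gt0 [N0 H2x]]] := H2 x Ex_gt1 a b aEx bEx ab.
set U := \bigcup_i Ec i; set B := \bigcup_(y | y != x) Ec y.
have U_AB : U = Ec x :|: B by rewrite /U (bigD1 x).
have neq_xy y : y != x -> x <> y by move=> /eqP; apply: not_eq_sym.
have mu_ge0 N z : 0 <= mu N z by case: (mu_inv N).
pose T N := \big[Rplus/0]_(y | y != x) mean_trace_rate (Rt N) (mu N) U (Ec x) (Ec y).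
have cv_T : Un_cv (fun N => theta N * T N) (\big[Rplus/0]_(y | y != x) r x y).
  have cv_y y (yx : y != x) := cv_r x y (neq_xy y yx).
  by apply: (Un_cv_ext _ _ _ _ (Un_cv_big (index_enum _) cv_y)) => N; rewrite /T big_distrr.
have T_ge0 N : 0 <= T N.
  by apply: big_Rge0 => y _; apply: mean_trace_rate_ge0 (Rt_ge0 N) _ _ _ _ (mu_ge0 N).
apply: (Un_cv_squeeze0 (v := fun N => alpha N / theta N * (theta N * T N * / c)) (N0 := N0)).
  move=> N N0N; have muA_gt0 : 0 < rsum (Ec x) (mu N).
    by apply: Rdiv_den_gt0 c_gt0 (H2x N N0N); apply: big_Rge0.
  rewrite (cap_partition (Rt_ge0 N) U_AB (F := Ec) (P := fun y => y != x)) //; last 2 first.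
  - by move=> i j _ _ /eqP; apply: disjE.
  - lra.
  have -> : alpha N / theta N * (theta N * T N * / c) = alpha N * T N / c.
    by move: (theta_gt0 N) => ?; field; split; lra.
  exact: Rdiv_bounds_of_lower_bound muA_gt0 (alpha_gt0 N) c_gt0 (T_ge0 N) (H2x N N0N).
have := CV_mult _ _ _ _ cv_alpha_theta (CV_mult _ _ _ _ cv_T (Un_cv_const (/ c))).
by rewrite Rmult_0_l.
Qed.
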